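(* For every positive integer $m$ and every integer $n\ge 0$, \[ \sum_{i=0}^{n} q^{-2i}q^{m(i^2+2i)}\frac{(1-q^{i+1})^3(1+q^{i+1})}{(1-q)(1-q^{n+1})(1-q^{n+2})} =\sum_{0\leq k_m\leq\dots\leq k_1\leq n}q^{-2k_m}q^{\sum_{j=1}^m(k_j^2+2k_j)} \frac{(q)_n^2}{(q)_{k_m}^2(q)_{n-k_1}\prod_{j=1}^{m-1}(q)_{k_j-k_{j+1}}} \cdot\frac{(1-q^{n+1})(1-q^{n+2})}{(1-q^{n-k_m+1})(1-q^{n-k_m+2})} \] as rational functions of $q$ (the empty product for $m=1$ equals $1$).
   Context: $(q)_k=\prod_{l=1}^{k}(1-q^l)$ for $k\ge0$, $(q)_0=1$. *)

From HB Require Import structures.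
From mathcomp Require Import all_boot all_order all_algebra.
Set Implicit Arguments. Unset Strict Implicit. Unset Printing Implicit Defensive.
Import Order.TTheory GRing.Theory Num.Theory.
Local Open Scope ring_scope.

Definition RF : fieldType := {fraction {poly rat}}.

Definition qX : RF := tofrac ('X : {poly rat}).

Definition qpoch (R : nzRingType) (q : R) (k : nat) : R :=
  \prod_(1 <= l < k.+1) (1 - q ^+ l).

From mathcomp Require Import all_boot all_algebra.
From mathcomp Require Import ring zify.
Import GRing.Theory.
Local Open Scope ring_scope.

(* Both sides are the m-th step of a Bailey chain started from one Bailey pair
   (alpha, beta) relative to a = q^2 (with n as parameter), read at index n:
   Bailey's lemma multiplies alpha_r by q^(r^2+2r) at each step, which gives the
   left side, while unfolding the m steps of beta gives the nested sum over
   n >= k_1 >= ... >= k_m on the right.  Bailey's lemma reduces to the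
   Durfee-rectangle identity
     sum_j q^(j^2+bj) / ((q)_(M-j) (q)_j (q)_(j+b)) = 1 / ((q)_M (q)_(M+b)),
   and this identity and the Bailey-pair property are both proved by the
   Wilf-Zeilberger method: the summand U k r, normalised so that its sum over r
   should be 1, satisfies U (k+1) r - U k r = G k (r+1) - G k r for an explicit
   certificate G, so the sum telescopes to its value at k = 0. *)

Lemma wz_sum (V : zmodType) (K : nat) (U G : nat -> nat -> V) :
    (forall k r, (k < K)%N -> (r <= k)%N -> U k.+1 r = U k r + (G k r.+1 - G k r)) ->
    (forall k, (k < K)%N -> G k 0 = 0) ->
    (forall k, (k < K)%N -> G k k.+1 = - U k.+1 k.+1) ->
  forall k, (k <= K)%N -> \sum_(r < k.+1) U k r = U 0%N 0%N.
Proof.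
move=> UD G0 Gtop; elim=> [|k IH] ltkK; first by rewrite big_ord1.
rewrite big_ord_recr /= -IH ?(ltnW ltkK) //.
rewrite (eq_bigr (fun r : 'I_k.+1 => U k r + (G k r.+1 - G k r))); last first.
  by move=> r _; rewrite UD // -ltnS.
rewrite big_split /= -(big_mkord xpredT (fun r => G k r.+1 - G k r)).
by rewrite telescope_sumr // G0 // Gtop // subr0 -addrA addNr addr0.
Qed.

Section QSeries.
Variables (R : fieldType) (q : R).
Hypothesis q_neq0 : q != 0.
Hypothesis q_not_root1 : forall j, (0 < j)%N -> 1 - q ^+ j != 0.
Local Notation P := (qpoch q).

Lemma qpoch0 : P 0 = 1.
Proof. by rewrite /qpoch big_geq. Qed.

Lemma qpochS n : P n.+1 = P n * (1 - q ^+ n.+1).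
Proof. by rewrite /qpoch big_nat_recr. Qed.

Lemma one_sub_exprS_neq0 n : 1 - q ^+ n.+1 != 0.
Proof. exact: q_not_root1. Qed.

Lemma qpoch_neq0 n : P n != 0.
Proof.
elim: n => [|n IH]; first by rewrite qpoch0 oner_neq0.
by rewrite qpochS mulf_neq0 ?one_sub_exprS_neq0.
Qed.

Lemma one_sub_q_neq0 : 1 - q != 0.
Proof. by rewrite -[q]expr1 one_sub_exprS_neq0. Qed.

(* [field] fails on powers whose exponent is a compound sum or successor, so
   callers first split them with [exprD] and [exprS]; the resulting side
   conditions 1 - q * q ^+ n != 0 are refolded here. *)
Ltac field_nz := field; rewrite -?exprD -?expr2 -?exprS;
  by rewrite ?oner_neq0 ?qpoch_neq0 ?one_sub_exprS_neq0 ?one_sub_q_neq0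
             ?expf_neq0 ?q_neq0 ?andbT ?andTb.

Definition durfee_term b M j :=
  q ^+ (j ^ 2 + b * j) * (P M * P (M + b)) / (P (M - j) * P j * P (j + b)).
Definition durfee_cert b M j :=
  - q ^+ (M.+1 - j) * (1 - q ^+ j) * (1 - q ^+ (j + b)) * q ^+ (j ^ 2 + b * j)
  * (P M * P (M + b)) / (P (M.+1 - j) * P j * P (j + b)).

Lemma durfee_wz b M j : (j <= M)%N ->
  durfee_term b M.+1 j = durfee_term b M j + (durfee_cert b M j.+1 - durfee_cert b M j).
Proof.
move=> lejM; have [i ME] : exists i, M = (i + j)%N by exists (M - j)%N; lia.
rewrite ME /durfee_term /durfee_cert.
have -> : ((i + j).+1 - j = i.+1)%N by lia.
have -> : (i + j - j = i)%N by lia.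
have -> : ((i + j).+1 - j.+1 = i)%N by lia.
have -> : (j.+1 ^ 2 + b * j.+1 = (j ^ 2 + b * j) + (j + j + b).+1)%N.
  by rewrite !expnS !expn0 !muln1; nia.
rewrite !addSn !qpochS !exprD !exprS !exprD.
field_nz.
Qed.

Lemma durfee_cert0 b M : durfee_cert b M 0 = 0.
Proof. by rewrite /durfee_cert expr0 subrr !(mulr0, mul0r). Qed.

Lemma durfee_cert_top b M : durfee_cert b M M.+1 = - durfee_term b M.+1 M.+1.
Proof.
rewrite /durfee_term /durfee_cert subnn expr0 qpoch0 !addSn !qpochS.
field_nz.
Qed.

Lemma durfee_sum b M :
  \sum_(j < M.+1) q ^+ (j ^ 2 + b * j) / (P (M - j) * P j * P (j + b)) = (P M * P (M + b))^-1.
Proof.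
have sum_term : \sum_(j < M.+1) durfee_term b M j = 1.
  rewrite (@wz_sum _ M (durfee_term b) (durfee_cert b)) //.
  - by rewrite /durfee_term subnn !add0n muln0 expr0 qpoch0 !mul1r divff ?qpoch_neq0.
  - by move=> k r _; apply: durfee_wz.
  - by move=> k _; rewrite durfee_cert0.
  - by move=> k _; rewrite durfee_cert_top.
rewrite -[RHS]mulr1 -sum_term mulr_sumr; apply: eq_bigr => j _.
rewrite /durfee_term; field_nz.
Qed.

Lemma bailey_sum r n : (r <= n)%N ->
  \sum_(r <= k < n.+1) q ^+ (k ^ 2 + 2 * k) / (P (n - k) * P (k - r) * P (k + r + 2))
  = q ^+ (r ^ 2 + 2 * r) / (P (n - r) * P (n + r + 2)).
Proof.
move=> lern; set b := (r + r + 2)%N; set M := (n - r)%N.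
rewrite -{1}(add0n r) big_addn subSn // big_mkord.
transitivity (q ^+ (r ^ 2 + 2 * r)
  * \sum_(j < M.+1) q ^+ (j ^ 2 + b * j) / (P (M - j) * P j * P (j + b))).
  rewrite mulr_sumr; apply: eq_bigr => j _.
  have lejM : (j <= M)%N by rewrite -ltnS.
  have -> : (n - (j + r) = M - j)%N by lia.
  have -> : (j + r - r = j)%N by lia.
  have -> : (j + r + r + 2 = j + b)%N by lia.
  have -> : ((j + r) ^ 2 + 2 * (j + r) = (r ^ 2 + 2 * r) + (j ^ 2 + b * j))%N.
    by rewrite /b !expnS !expn0 !muln1; nia.
  by rewrite exprD mulrA.
by rewrite durfee_sum (_ : (M + b = n + r + 2)%N) //; lia.
Qed.

(* The denominator (q)_(k+r+2) in [bailey_pair] is (q)_2 (q^3;q)_(k+r); the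
   constant (q)_2 is absorbed into alpha. *)
Definition bailey_alpha N r :=
  q ^- (2 * r) * ((1 - q ^+ r.+1) ^+ 3 * (1 + q ^+ r.+1)) * P (N - r) * P (N + r + 2)
  / ((1 - q) * (1 - q ^+ N.+1) * (1 - q ^+ N.+2)).
Definition bailey_beta N k :=
  q ^- (2 * k) * (P N ^+ 2 / P k ^+ 2)
  * ((1 - q ^+ N.+1) * (1 - q ^+ N.+2) / ((1 - q ^+ (N - k).+1) * (1 - q ^+ (N - k).+2))).

Definition bailey_pair_term N k r :=
  bailey_alpha N r / (P (k - r) * P (k + r + 2) * bailey_beta N k).
Definition bailey_pair_cert N k r :=
  - q ^+ 2 * (1 - q ^+ r) ^+ 2 * (1 - q ^+ r.+1) ^+ 2 * P (N.+1 - r) * P (N + r + 2)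
  / (q ^+ (2 * r) * (1 - q ^+ (N - k).+2) * P (k.+1 - r) * P (k + r + 2)
     * ((1 - q) * (1 - q ^+ N.+1) * (1 - q ^+ N.+2)) * bailey_beta N k).

Lemma bailey_pair_wz N k r : (k < N)%N -> (r <= k)%N ->
  bailey_pair_term N k.+1 r
  = bailey_pair_term N k r + (bailey_pair_cert N k r.+1 - bailey_pair_cert N k r).
Proof.
move=> ltkN lerk.
have [c NE] : exists c, N = (k + c).+1 by exists (N - k.+1)%N; lia.
have [a kE] : exists a, k = (r + a)%N by exists (k - r)%N; lia.
subst N k.
rewrite /bailey_pair_term /bailey_pair_cert /bailey_alpha /bailey_beta.
have -> : ((r + a + c).+1 - r = (a + c).+1)%N by lia.
have -> : ((r + a).+1 - r = a.+1)%N by lia.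
have -> : ((r + a + c).+1 - (r + a).+1 = c)%N by lia.
have -> : (r + a - r = a)%N by lia.
have -> : ((r + a + c).+1 - (r + a) = c.+1)%N by lia.
have -> : ((r + a + c).+2 - r.+1 = (a + c).+1)%N by lia.
have -> : ((r + a).+1 - r.+1 = a)%N by lia.
have -> : ((r + a + c).+2 - r = (a + c).+2)%N by lia.
rewrite !(addnS, addSn, addn0) !mul2n !doubleS -!addnn !(qpochS, exprS, exprD).
field_nz.
Qed.

Lemma bailey_pair_cert0 N k : bailey_pair_cert N k 0 = 0.
Proof. by rewrite /bailey_pair_cert expr0 subrr expr0n !(mulr0, mul0r). Qed.

Lemma bailey_pair_cert_top N k : (k < N)%N ->
  bailey_pair_cert N k k.+1 = - bailey_pair_term N k.+1 k.+1.
Proof.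
move=> ltkN; have [c ->] : exists c, N = (k + c).+1 by exists (N - k.+1)%N; lia.
rewrite /bailey_pair_term /bailey_pair_cert /bailey_alpha /bailey_beta subnn.
have -> : ((k + c).+2 - k.+1 = c.+1)%N by lia.
have -> : ((k + c).+1 - k = c.+1)%N by lia.
have -> : ((k + c).+1 - k.+1 = c)%N by lia.
rewrite !(addnS, addSn, addn0) !mul2n !doubleS -!addnn qpoch0 !(qpochS, exprS, exprD).
field_nz.
Qed.

Lemma bailey_pair_term00 N : bailey_pair_term N 0 0 = 1.
Proof.
rewrite /bailey_pair_term /bailey_alpha /bailey_beta !subn0 !addn0 !muln0 !expr0 qpoch0.
rewrite !(addnS, addn0) !(qpochS, exprS) qpoch0.
field_nz.
Qed.

Lemma bailey_beta_neq0 {N k} : (k <= N)%N -> bailey_beta N k != 0.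
Proof.
move=> lekN; rewrite /bailey_beta; have [c ->] : exists c, N = (k + c)%N by exists (N - k)%N; lia.
have -> : (k + c - k = c)%N by lia.
by rewrite !(mulf_neq0, invr_neq0, expf_neq0, qpoch_neq0, one_sub_exprS_neq0).
Qed.

Lemma bailey_pair N k : (k <= N)%N ->
  bailey_beta N k = \sum_(r < k.+1) bailey_alpha N r / (P (k - r) * P (k + r + 2)).
Proof.
move=> lekN; have beta_neq0 := bailey_beta_neq0 lekN.
have sum_term : \sum_(r < k.+1) bailey_pair_term N k r = 1.
  rewrite (@wz_sum _ N _ (bailey_pair_cert N)) ?bailey_pair_term00 //.
  - exact: bailey_pair_wz.
  - by move=> ? _; rewrite bailey_pair_cert0.
  - exact: bailey_pair_cert_top.
rewrite -[LHS]mulr1 -sum_term mulr_sumr; apply: eq_bigr => r _.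
rewrite /bailey_pair_term; field_nz.
Qed.

Fixpoint chain_term N p (s : seq nat) : R :=
  if s is k :: s' then q ^+ (k ^ 2 + 2 * k) / P (p - k) * chain_term N k s'
  else bailey_beta N p.

Definition chain_sum N m n :=
  \sum_(t : m.-tuple 'I_N.+1 | path geq n (map val t)) chain_term N n (map val t).

Lemma chain_sum0 N n : chain_sum N 0 n = bailey_beta N n.
Proof. by rewrite /chain_sum (big_pred1 [tuple]) // => t; rewrite tuple0. Qed.

Lemma chain_sumS N m n : (n <= N)%N ->
  chain_sum N m.+1 n = \sum_(k < n.+1) q ^+ (k ^ 2 + 2 * k) / P (n - k) * chain_sum N m k.
Proof.
move=> lenN; rewrite (big_ord_widen N.+1 (fun k => q ^+ (k ^ 2 + 2 * k) / P (n - k) * chain_sum N m k)) //.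
under eq_bigr do rewrite /chain_sum mulr_sumr.
rewrite pair_big_dep /= /chain_sum.
pose cons_tuple (p : 'I_N.+1 * m.-tuple 'I_N.+1) : m.+1.-tuple 'I_N.+1 := [tuple of p.1 :: p.2].
rewrite (reindex cons_tuple) /=; last first.
  exists (fun t => (thead t, [tuple of behead t])) => [[k t] _ | t _] /=.
    by rewrite theadE; congr pair; apply: val_inj.
  by rewrite [RHS]tuple_eta.
by apply: eq_bigl => [[k t]]; rewrite /= ltnS.
Qed.

Lemma chain_sum_closed N m n : (n <= N)%N ->
  chain_sum N m n = \sum_(r < n.+1)
    bailey_alpha N r * q ^+ (m * (r ^ 2 + 2 * r)) / (P (n - r) * P (n + r + 2)).
Proof.
elim: m n => [|m IH] n lenN.
  by rewrite chain_sum0 bailey_pair //; apply: eq_bigr => r _; rewrite mul0n expr0 mulr1.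
pose c r := bailey_alpha N r * q ^+ (m * (r ^ 2 + 2 * r)).
pose F k r := c r * (q ^+ (k ^ 2 + 2 * k) / (P (n - k) * P (k - r) * P (k + r + 2))).
rewrite chain_sumS //.
transitivity (\sum_(k < n.+1) \sum_(r < n.+1 | (r <= k)%N) F k r).
  apply: eq_bigr => k _; have lekn : (k <= n)%N by rewrite -ltnS.
  transitivity (\sum_(r < k.+1) F k r); last exact: big_ord_widen.
  rewrite IH ?(leq_trans lekn) // mulr_sumr; apply: eq_bigr => r _.
  rewrite /F /c; field_nz.
rewrite (exchange_big_dep xpredT) //=; apply: eq_bigr => r _.
have lern : (r <= n)%N by rewrite -ltnS.
transitivity (\sum_(r <= k < n.+1) F k r); first by rewrite big_geq_mkord.
rewrite -mulr_sumr bailey_sum // /c mulSn !exprD.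
field_nz.
Qed.

Lemma chain_sum_top N m :
  chain_sum N m N = \sum_(t : m.-tuple 'I_N.+1 | sorted geq (map val t))
    chain_term N N (map val t).
Proof.
apply: eq_bigl => t; case E: (map val t) => [|x s] //=.
have /mapP[y _ ->] : x \in map val t by rewrite E mem_head.
by rewrite leq_ord.
Qed.

Lemma chain_term_closed N p s : s != [::] ->
  chain_term N p s =
    let kj := fun j : nat => nth 0%N s j in
    q ^- (2 * kj (size s).-1) * q ^+ (\sum_(j < size s) (kj j ^ 2 + 2 * kj j))
    * (P N ^+ 2 / (P (kj (size s).-1) ^+ 2 * P (p - kj 0%N)
                   * \prod_(j < (size s).-1) P (kj j - kj j.+1)))
    * ((1 - q ^+ N.+1) * (1 - q ^+ N.+2)
       / ((1 - q ^+ (N - kj (size s).-1).+1) * (1 - q ^+ (N - kj (size s).-1).+2))).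
Proof.
elim: s p => [//|k s IH] p _; case: s IH => [|k' s] IH.
  by rewrite /= big_ord1 big_ord0 /bailey_beta; field_nz.
transitivity (q ^+ (k ^ 2 + 2 * k) / P (p - k) * chain_term N k (k' :: s)) => //.
rewrite IH //= !big_ord_recl /=.
set Pr := \prod_(j < size s) _.
have Pr_neq0 : Pr != 0 by apply/prodf_neq0 => j _; exact: qpoch_neq0.
rewrite !exprD; field_nz.
Qed.

Theorem bailey_chain_identity m n : (0 < m)%N ->
  \sum_(i < n.+1)
     q ^- (2 * i) * q ^+ (m * (i ^ 2 + 2 * i))
     * ((1 - q ^+ i.+1) ^+ 3 * (1 + q ^+ i.+1)
        / ((1 - q) * (1 - q ^+ n.+1) * (1 - q ^+ n.+2)))
  =
  \sum_(k : m.-tuple 'I_n.+1 | sorted (fun a b : nat => (b <= a)%N) (map val k))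
     let ks := map val k in
     let kj := fun j : nat => nth 0%N ks j in
     q ^- (2 * kj m.-1)
     * q ^+ (\sum_(j < m) (kj j ^ 2 + 2 * kj j))
     * (qpoch q n ^+ 2
        / (qpoch q (kj m.-1) ^+ 2 * qpoch q (n - kj 0%N)
           * \prod_(j < m.-1) qpoch q (kj j - kj j.+1)))
     * ((1 - q ^+ n.+1) * (1 - q ^+ n.+2)
        / ((1 - q ^+ (n - kj m.-1).+1) * (1 - q ^+ (n - kj m.-1).+2))).
Proof.
move=> m_gt0; transitivity (chain_sum n m n).
  rewrite chain_sum_closed //; apply: eq_bigr => i _.
  by rewrite /bailey_alpha; field_nz.
rewrite chain_sum_top; apply: eq_bigr => t _.
have t_neq0 : map val t != [::] by rewrite -size_eq0 size_map size_tuple -lt0n.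
by rewrite chain_term_closed // size_map size_tuple.
Qed.
End QSeries.

Lemma qX_neq0 : qX != 0.
Proof. by rewrite /qX tofrac_eq0 polyX_eq0. Qed.

Lemma qX_not_root1 j : (0 < j)%N -> 1 - qX ^+ j != 0.
Proof.
move=> j_gt0; rewrite /qX -tofracXn -tofrac1 -tofracB tofrac_eq0 subr_eq0.
apply/eqP=> /(congr1 (fun p : {poly rat} => size p)).
by rewrite size_polyXn size_poly1; case: j j_gt0.
Qed.

Theorem mainTheorem3 (m n : nat) (hm : (0 < m)%N) :
  let q := qX in
  \sum_(i < n.+1)
     q ^- (2 * i) * q ^+ (m * (i ^ 2 + 2 * i))
     * ((1 - q ^+ i.+1) ^+ 3 * (1 + q ^+ i.+1)
        / ((1 - q) * (1 - q ^+ n.+1) * (1 - q ^+ n.+2)))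
  =
  \sum_(k : m.-tuple 'I_n.+1 | sorted (fun a b : nat => (b <= a)%N) (map val k))
     let ks := map val k in
     let kj := fun j : nat => nth 0%N ks j in
     q ^- (2 * kj m.-1)
     * q ^+ (\sum_(j < m) (kj j ^ 2 + 2 * kj j))
     * (qpoch q n ^+ 2
        / (qpoch q (kj m.-1) ^+ 2 * qpoch q (n - kj 0%N)
           * \prod_(j < m.-1) qpoch q (kj j - kj j.+1)))
     * ((1 - q ^+ n.+1) * (1 - q ^+ n.+2)
        / ((1 - q ^+ (n - kj m.-1).+1) * (1 - q ^+ (n - kj m.-1).+2))).
Proof. exact: (@bailey_chain_identity _ qX qX_neq0 qX_not_root1). Qed.
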